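(* Let $(a_n)_{n\ge 0}$ be the Pisot sequence $E(4,7)$, i.e. $a_0=4$, $a_1=7$, and $a_n=\left\lfloor \frac{a_{n-1}^2}{a_{n-2}}+\frac12\right\rfloor$ for $n\ge 2$. Then $a_n = 2a_{n-1}-a_{n-2}+a_{n-3}$ for all $n\ge 3$.
   Context: $\lfloor x\rfloor$ denotes the largest integer $\le x$. The sequence begins $4, 7, 12, 21, 37, 65, 114, 200, \dots$. *)

From mathcomp Require Import all_boot all_order all_algebra.
Set Implicit Arguments. Unset Strict Implicit. Unset Printing Implicit Defensive.
Import Order.TTheory GRing.Theory Num.Theory.
Local Open Scope ring_scope.

Definition pisot_step (p : int * int) : int * int :=
  (p.2, Num.floor ((p.2%:~R ^+ 2 / p.1%:~R + 1 / 2 : rat))).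

Definition pisot_pair (n : nat) : int * int := iter n pisot_step (4, 7).

Definition a (n : nat) : int := (pisot_pair n).1.

Lemma a0 : a 0 = 4. Proof. by []. Qed.
Lemma a1 : a 1 = 7. Proof. by []. Qed.
Lemma a_rec (n : nat) : (2 <= n)%N ->
  a n = Num.floor ((a n.-1)%:~R ^+ 2 / (a n.-2)%:~R + 1 / 2 : rat).
Proof.
by case: n => [|[|n]].
Qed.

From mathcomp Require Import all_boot all_order all_algebra.
From mathcomp Require Import zify ring lra.

(* Let b be the linear recurrence sequence 4, 7, 12, ... of the claim.  It
   suffices that b_(n+1)^2 / b_n lies within 1/2 of b_(n+2), i.e. that the
   Cassini-type determinant C_n = b_(n+2) b_n - b_(n+1)^2 satisfies
   2 |C_n| < b_n.  The characteristic roots of C are the reciprocals of those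
   of b, so C grows only like the square root of b.  Concretely, the positive
   definite quadratic form [lyap] in (C_n, C_(n+1), C_(n+2)) grows by a factor
   at most 5/2 per step, whereas b_n^2 grows by at least (5/3)^2 > 5/2; so the
   inequality 4 lyap <= 3 b_n^2, checked at n = 5, persists, and it bounds C_n. *)

Set Implicit Arguments.
Unset Strict Implicit.
Unset Printing Implicit Defensive.

Import Order.TTheory GRing.Theory Num.Theory.
Local Open Scope ring_scope.

Lemma floor_add_half_eq (R : archiRealFieldType) (w : R) (z : int) :
  `|w - z%:~R| < 1 / 2 -> Num.floor (w + 1 / 2) = z.
Proof.
rewrite ltr_norml => /andP[lo hi].
apply/eqP; rewrite floor_eq intrD rmorph1; apply/andP; split; lra.
Qed.

Lemma floor_sqr_div_add_half (R : archiRealFieldType) (x y z : int) :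
  2 * `|z * x - y ^+ 2| < x -> Num.floor (y%:~R ^+ 2 / x%:~R + 1 / 2 : R) = z.
Proof.
move=> lt_x; apply: floor_add_half_eq.
have xR_gt0 : (0 : R) < x%:~R.
  by rewrite ltr0z; apply: le_lt_trans lt_x; rewrite mulr_ge0.
have -> : y%:~R ^+ 2 / x%:~R - z%:~R = - (z * x - y ^+ 2)%:~R / (x%:~R : R).
  by rewrite rmorphB rmorphM rmorphXn /=; field; rewrite gt_eqF.
rewrite normf_div normrN (gtr0_norm xR_gt0) ltr_pdivrMr // -intr_norm.
by move: lt_x; rewrite -(ltr_int R) intrM; lra.
Qed.

Section Lyapunov.
Variable R : realDomainType.

Definition lyap (e0 e1 e2 : R) : R :=
  5 * e0 ^+ 2 + 13 * e1 ^+ 2 + 7 * e2 ^+ 2 - 10 * e0 * e1 + 2 * e0 * e2 - 8 * e1 * e2.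

Lemma lyap_step (e0 e1 e2 : R) :
  2 * lyap e1 e2 (e2 - 2 * e1 + e0) <= 5 * lyap e0 e1 e2.
Proof.
rewrite -subr_ge0.
have -> : 5 * lyap e0 e1 e2 - 2 * lyap e1 e2 (e2 - 2 * e1 + e0) =
  (e0 + e1) ^+ 2 + (e0 - e2) ^+ 2 + 9 * e0 ^+ 2 + 6 * e1 ^+ 2 + 10 * e2 ^+ 2
  by rewrite /lyap; ring.
by rewrite !(addr_ge0, sqr_ge0, mulr_ge0, ler0n).
Qed.

Lemma lyap_ge (e0 e1 e2 : R) : 1589 * e0 ^+ 2 <= 525 * lyap e0 e1 e2.
Proof.
rewrite -subr_ge0.
have -> : 525 * lyap e0 e1 e2 - 1589 * e0 ^+ 2 =
  75 * (7 * e2 - 4 * e1 + e0) ^+ 2 + (75 * e1 - 31 * e0) ^+ 2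
  by rewrite /lyap; ring.
by rewrite !(addr_ge0, sqr_ge0, mulr_ge0, ler0n).
Qed.

End Lyapunov.

Definition b_step (t : int * int * int) : int * int * int :=
  let: (x, y, z) := t in (y, z, 2 * z - y + x).

Definition b_triple (n : nat) : int * int * int := iter n b_step (4, 7, 12).

Definition b (n : nat) : int := (b_triple n).1.1.

Lemma b_tripleE n : b_triple n = (b n, b n.+1, b n.+2).
Proof. by rewrite /b /b_triple !iterS; case: (iter n b_step _) => [[]]. Qed.

Lemma bSSS n : b n.+3 = 2 * b n.+2 - b n.+1 + b n.
Proof. by rewrite {1}/b /b_triple !iterS -/(b_triple n) b_tripleE. Qed.

Lemma b_growth n : [/\ 0 < b n, 5 * b n <= 3 * b n.+1 & 5 * b n.+1 <= 9 * b n].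
Proof.
pose P m := [/\ 0 < b m, 5 * b m <= 3 * b m.+1 & 5 * b m.+1 <= 9 * b m].
suff /(_ n)[] : forall m, P m /\ P m.+1 by [].
elim=> [|m [[b0 lo0 hi0] [b1 lo1 hi1]]]; first by split.
by split=> //; split; rewrite ?bSSS; lia.
Qed.

Definition cassini (n : nat) : int := b n.+2 * b n - b n.+1 ^+ 2.

Lemma cassiniSSS n : cassini n.+3 = cassini n.+2 - 2 * cassini n.+1 + cassini n.
Proof. by rewrite /cassini !bSSS; ring. Qed.

Lemma lyap_cassini_le n : (5 <= n)%N ->
  4 * lyap (cassini n) (cassini n.+1) (cassini n.+2) <= 3 * b n ^+ 2.
Proof.
elim: n => // n IH; rewrite leq_eqVlt => /predU1P[<- | /IH {}IH]; first by vm_compute.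
have := lyap_step (cassini n) (cassini n.+1) (cassini n.+2); rewrite -cassiniSSS.
have [b_gt0 b_lo _] := b_growth n.
have b_sqr_lo : 25 * b n ^+ 2 <= 9 * b n.+1 ^+ 2 by nia.
lia.
Qed.

Lemma cassini_lt n : 2 * `|cassini n| < b n.
Proof.
have [b_gt0 _ _] := b_growth n.
rewrite -ltr_sqr ?nnegrE ?mulr_ge0 ?normr_ge0 ?ltW // exprMn real_normK ?num_real //.
case: (ltnP n 5) => [|le5n]; first by case: n {b_gt0} => [|[|[|[|[|]]]]].
have := lyap_ge (cassini n) (cassini n.+1) (cassini n.+2).
have := lyap_cassini_le le5n.
have : 0 < b n ^+ 2 by rewrite exprn_gt0.
lia.
Qed.

Lemma pisot_pairE n : pisot_pair n = (b n, b n.+1).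
Proof.
elim: n => [//|n IH].
rewrite /pisot_pair iterS -/(pisot_pair n) IH /pisot_step /=; congr pair.
exact: floor_sqr_div_add_half (cassini_lt n).
Qed.

Theorem mainTheorem1 : forall n : nat, (3 <= n)%N ->
  a n = 2 * a (n - 1)%N - a (n - 2)%N + a (n - 3)%N.
Proof.
case=> [|[|[|n]]] // _.
by rewrite /a !pisot_pairE /= !subSS !subn0 bSSS.
Qed.
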